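(* Let $(\Omega,\mathcal F,\mathbb P)$ be a probability space with $\Omega$ compact. Let $\mathfrak G$ (option sellers) and $\mathfrak R$ (option buyers) be finite disjoint index sets, and for each $i\in\mathfrak G\cup\mathfrak R$ let $\pi_i^\omega$ (electricity-market profit) and $p_i^{\omega,*}$ (real-time price faced by $i$) be given square-integrable random variables. Fix $\overline q,\overline K,\overline\Delta>0$ and $\mathcal A_0:=[0,\overline q]\times[0,\overline K]\times[0,\overline\Delta]$. Assume every participant is risk-neutral, i.e. its acceptable set is $$\mathcal A_r=\{(q,K,\Delta)\in\mathcal A_0:\ \mathbb E[\pi_r^\omega-q\Delta+(p_r^{\omega,*}-K)^+\Delta]\ge\mathbb E[\pi_r^\omega]\}\quad (r\in\mathfrak R),$$ $$\mathcal A_g=\{(q,K,\Delta)\in\mathcal A_0:\ \mathbb E[\pi_g^\omega+q\Delta-(p_g^{\omega,*}-K)^+\Delta]\ge\mathbb E[\pi_g^\omega]\}\quad (g\in\mathfrak G).$$ Consider the problem of maximizing $\mathbb E[\mathsf{MS}^\omega]$, where $$\mathsf{MS}^\omega:=\sum_{r\in\mathfrak R}q_r\Delta_r-\sum_{g\in\mathfrak G}q_g\Delta_g-\sum_{r\in\mathfrak R}(p_r^{\omega,*}-K_r)^+\Delta_r+\sum_{g\in\mathfrak G}(p_g^{\omega,*}-K_g)^+\delta_g^\omega,$$ over $(q_i,K_i,\Delta_i)\in\mathbb R_+^3$ for all $i\in\mathfrak G\cup\mathfrak R$ and $\mathcal F$-measurable $\delta_g:\Omega\to[0,\Delta_g]$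 in $\mathcal L_2(\Omega)$ for $g\in\mathfrak G$, subject to $\sum_{g}\Delta_g=\sum_r\Delta_r$, $(q_i,K_i,\Delta_i)\in\mathcal A_i$ for all $i$, and, $\mathbb P$-almost surely, $\delta_g^\omega\in[0,\Delta_g]$ for all $g$ and $\sum_{g\in\mathfrak G}\delta_g^\omega=\sum_{r\in\mathfrak R}\Delta_r\mathbf 1\{p_r^{\omega,*}\ge K_r\}$. Then the optimal value of this problem is $0$; that is, $\mathbb E[\mathsf{MS}^{\omega,*}]=0$ at an optimal solution.
   Context: $z^+:=\max\{z,0\}$ and $\mathbf 1\{\cdot\}$ is the indicator of an event. $\mathsf{MS}^\omega$ is the merchandising surplus of a profit-maximizing market maker that buys cash-settled call options (option price $q$, strike $K$, quantity $\Delta$; payoff $(p-K)^+$ per unit at real-time price $p$) from sellers $g$ and sells them to buyers $r$, with $\delta_g^\omega$ the amount of cashable options allocated to seller $g$ in scenario $\omega$. *)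

From mathcomp Require Import all_boot all_order all_algebra.
From mathcomp Require Import all_classical all_reals all_analysis.
Set Implicit Arguments. Unset Strict Implicit. Unset Printing Implicit Defensive.
Import Order.TTheory GRing.Theory Num.Theory.
Local Open Scope ring_scope.
Local Open Scope classical_set_scope.

Definition posp {R : realType} (z : R) : R := Num.max z 0.

Definition sq_integrable {R : realType} {d : measure_display} {Omega : measurableType d}
  (P : probability Omega R) (f : Omega -> R) : Prop :=
  measurable_fun setT f /\ P.-integrable setT (fun w => ((f w) ^+ 2)%:E).

Definition inA0 {R : realType} (qbar Kbar Dbar q K D : R) : Prop :=
  0 <= q <= qbar /\ 0 <= K <= Kbar /\ 0 <= D <= Dbar.

Definition acc_buyer {R : realType} {d : measure_display} {Omega : measurableType d}
  (P : probability Omega R) (qbar Kbar Dbar : R) (pi p : Omega -> R) (q K D : R) : Prop :=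
  inA0 qbar Kbar Dbar q K D /\
  (\int[P]_w ((pi w - q * D + posp (p w - K) * D)%:E) >= \int[P]_w ((pi w)%:E))%E.

Definition acc_seller {R : realType} {d : measure_display} {Omega : measurableType d}
  (P : probability Omega R) (qbar Kbar Dbar : R) (pi p : Omega -> R) (q K D : R) : Prop :=
  inA0 qbar Kbar Dbar q K D /\
  (\int[P]_w ((pi w + q * D - posp (p w - K) * D)%:E) >= \int[P]_w ((pi w)%:E))%E.

Definition MS {R : realType} {Omega : Type} {G Rr : finType}
  (pg : G -> Omega -> R) (pr : Rr -> Omega -> R)
  (qg Kg Dg : G -> R) (qr Kr Dr : Rr -> R) (delta : G -> Omega -> R) (w : Omega) : R :=
  \sum_(r : Rr) qr r * Dr r - \sum_(g : G) qg g * Dg g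
  - \sum_(r : Rr) posp (pr r w - Kr r) * Dr r
  + \sum_(g : G) posp (pg g w - Kg g) * delta g w.

Definition feasible {R : realType} {d : measure_display} {Omega : measurableType d}
  {G Rr : finType} (P : probability Omega R) (qbar Kbar Dbar : R)
  (pig pg : G -> Omega -> R) (pir pr : Rr -> Omega -> R)
  (qg Kg Dg : G -> R) (qr Kr Dr : Rr -> R) (delta : G -> Omega -> R) : Prop :=
  (forall g, 0 <= qg g /\ 0 <= Kg g /\ 0 <= Dg g) /\
      (forall r, 0 <= qr r /\ 0 <= Kr r /\ 0 <= Dr r) /\
      (forall g, sq_integrable P (delta g) /\ (forall w, 0 <= delta g w <= Dg g)) /\
      \sum_(g : G) Dg g = \sum_(r : Rr) Dr r /\
      (forall r, acc_buyer P qbar Kbar Dbar (pir r) (pr r) (qr r) (Kr r) (Dr r)) /\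
      (forall g, acc_seller P qbar Kbar Dbar (pig g) (pg g) (qg g) (Kg g) (Dg g)) /\
      {ae P, forall w, (forall g, (0 <= delta g w <= Dg g)%R) /\
         (\sum_(g : G) delta g w = \sum_(r : Rr) Dr r * ((Kr r <= pr r w)%R : bool)%:R)%R}.

Definition EMS {R : realType} {d : measure_display} {Omega : measurableType d}
  {G Rr : finType} (P : probability Omega R)
  (pg : G -> Omega -> R) (pr : Rr -> Omega -> R)
  (qg Kg Dg : G -> R) (qr Kr Dr : Rr -> R) (delta : G -> Omega -> R) : \bar R :=
  (\int[P]_w (MS pg pr qg Kg Dg qr Kr Dr delta w)%:E)%E.

From mathcomp Require Import all_boot all_order all_algebra.
From mathcomp Require Import all_classical all_reals all_analysis.
From mathcomp Require Import measurable_realfun ring lra.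
Import Order.TTheory GRing.Theory Num.Theory.
Local Open Scope ring_scope.

(* Trading nothing is feasible with zero surplus.  Conversely, since the
   payoffs (p - K)^+ are nonnegative and delta_g <= Delta_g, the surplus is at
   most its value under full delivery delta_g = Delta_g, which is the holder's
   gain (p - K)^+ Delta - q Delta of the sellers' options minus that of the
   buyers' options.  A risk-neutral buyer accepts a contract only if its
   expected holder's gain is nonnegative, a seller only if it is nonpositive,
   so the expected surplus is nonpositive. *)

Section real_integrable.
Context {R : realType} {d : measure_display} {T : measurableType d}.
Context {mu : {measure set T -> \bar R}}.
Local Notation rint f := (mu.-integrable setT (EFin \o f)).

Lemma integrable_realD {f g : T -> R} : rint f -> rint g -> rint (fun x => f x + g x).
Proof.
move=> fi gi; apply: (eq_integrable measurableT _ _ _ (integrableD measurableT fi gi)).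
by move=> x _; rewrite /= EFinD.
Qed.

Lemma integrable_realB {f g : T -> R} : rint f -> rint g -> rint (fun x => f x - g x).
Proof.
move=> fi gi; apply: (eq_integrable measurableT _ _ _ (integrableB measurableT fi gi)).
by move=> x _; rewrite /= EFinB.
Qed.

Lemma integrable_realMr {f : T -> R} (c : R) : rint f -> rint (fun x => f x * c).
Proof.
move=> fi; apply: (eq_integrable measurableT _ _ _ (integrableZr measurableT c fi)).
by move=> x _; rewrite /= EFinM.
Qed.

Lemma integrable_real_sum {I : finType} {f : I -> T -> R} :
  (forall i, rint (f i)) -> rint (fun x => \sum_i f i x).
Proof.
move=> fi.
have sum_int := integrable_sum measurableT (index_enum I) (P := predT) (fun i _ => fi i).
by apply: (eq_integrable measurableT _ _ _ sum_int) => x _; rewrite /= sumEFin.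
Qed.

Lemma integrable_real_le {f g : T -> R} : measurable_fun setT f ->
  (forall x, `|f x| <= `|g x|) -> rint g -> rint f.
Proof.
move=> mf fg gi; apply: (le_integrable measurableT _ _ gi) => [|x _].
  exact/measurable_EFinP.
by rewrite lee_fin.
Qed.

Lemma integral_real_sum {I : finType} {f : I -> T -> R} : (forall i, rint (f i)) ->
  (\int[mu]_x (\sum_i f i x)%:E = \sum_i \int[mu]_x (f i x)%:E)%E.
Proof.
move=> fi; under eq_integral do rewrite -sumEFin.
exact: integral_sum.
Qed.

Lemma integral_ge0_of_leDr {f h : T -> R} : rint f -> rint h ->
  (\int[mu]_x (f x)%:E <= \int[mu]_x (f x + h x)%:E)%E -> (0 <= \int[mu]_x (h x)%:E)%E.
Proof.
move=> fi hi; under [X in (_ <= X)%E]eq_integral do rewrite EFinD.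
rewrite integralD_EFin // -[X in (X <= _)%E]adde0 leeD2lE //.
exact: integrable_fin_num.
Qed.

Lemma integral_le0_of_leBr {f h : T -> R} : rint f -> rint h ->
  (\int[mu]_x (f x)%:E <= \int[mu]_x (f x - h x)%:E)%E -> (\int[mu]_x (h x)%:E <= 0)%E.
Proof.
move=> fi hi; under [X in (_ <= X)%E]eq_integral do rewrite EFinB.
rewrite integralB_EFin // -[X in (X <= _)%E]adde0 leeD2lE ?oppe_ge0 //.
exact: integrable_fin_num.
Qed.

End real_integrable.

Lemma sq_integrable_integrable {R : realType} {d : measure_display}
    {T : measurableType d} (P : probability T R) (f : T -> R) :
  sq_integrable P f -> P.-integrable setT (EFin \o f).
Proof.
move=> [mf f2i]; apply: (integrable_real_le (g := fun x => 1 + f x ^+ 2) mf).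
  move=> x; rewrite [X in _ <= X]ger0_norm ?addr_ge0 ?sqr_ge0 //.
  have [fx0|fx0] := leP 0 (f x); [rewrite ger0_norm // | rewrite ltr0_norm //]; nra.
exact: integrable_realD (finite_measure_integrable_cst P 1 measurableT) f2i.
Qed.

Lemma posp_ge0 {R : realType} (z : R) : 0 <= posp z.
Proof. by rewrite /posp le_max lexx orbT. Qed.

Definition call_gain {R : realType} {T : Type} (p : T -> R) (q K D : R) (w : T) : R :=
  posp (p w - K) * D - q * D.

Section surplus.
Context {R : realType} {T : Type} {G Rr : finType}.
Variables (pg : G -> T -> R) (pr : Rr -> T -> R).
Variables (qg Kg Dg : G -> R) (qr Kr Dr : Rr -> R).

Lemma MS_le_full_delivery (delta : G -> T -> R) w :
  (forall g, delta g w <= Dg g) ->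
  MS pg pr qg Kg Dg qr Kr Dr delta w <= MS pg pr qg Kg Dg qr Kr Dr (fun g _ => Dg g) w.
Proof.
move=> delta_le; rewrite lerD2l; apply: ler_sum => g _.
by rewrite ler_wpM2l ?posp_ge0.
Qed.

Lemma MS_full_deliveryE w :
  MS pg pr qg Kg Dg qr Kr Dr (fun g _ => Dg g) w =
  \sum_g call_gain (pg g) (qg g) (Kg g) (Dg g) w
  - \sum_r call_gain (pr r) (qr r) (Kr r) (Dr r) w.
Proof. rewrite /MS /call_gain !sumrB; ring. Qed.

End surplus.

Section risk_neutral.
Context {R : realType} {d : measure_display} {T : measurableType d}.
Variable P : probability T R.
Local Notation rint f := (P.-integrable setT (EFin \o f)).

Lemma integrable_call_payoff {p : T -> R} K : rint p -> rint (fun w => posp (p w - K)).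
Proof.
move=> pint; apply: (integrable_funrpos (f := fun w => p w - K) measurableT).
exact: integrable_realB pint (finite_measure_integrable_cst P K measurableT).
Qed.

Lemma integrable_call_gain {p : T -> R} q K D : rint p -> rint (call_gain p q K D).
Proof.
move=> pint; apply: integrable_realB (finite_measure_integrable_cst P _ measurableT).
exact/integrable_realMr/integrable_call_payoff.
Qed.

Lemma acc_buyer_call_gain_ge0 qbar Kbar Dbar (pi p : T -> R) q K D :
  rint pi -> rint p -> acc_buyer P qbar Kbar Dbar pi p q K D ->
  (0 <= \int[P]_w (call_gain p q K D w)%:E)%E.
Proof.
move=> piint pint [_ acc].
apply: (integral_ge0_of_leDr piint (integrable_call_gain q K D pint)).
by under [X in (_ <= X)%E]eq_integral do rewrite /call_gain addrA addrAC.
Qed.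

Lemma acc_seller_call_gain_le0 qbar Kbar Dbar (pi p : T -> R) q K D :
  rint pi -> rint p -> acc_seller P qbar Kbar Dbar pi p q K D ->
  (\int[P]_w (call_gain p q K D w)%:E <= 0)%E.
Proof.
move=> piint pint [_ acc].
apply: (integral_le0_of_leBr piint (integrable_call_gain q K D pint)).
by under [X in (_ <= X)%E]eq_integral do rewrite /call_gain opprB addrA.
Qed.

Section expected_surplus.
Variables (G Rr : finType) (pg : G -> T -> R) (pr : Rr -> T -> R).
Hypotheses (pg_int : forall g, rint (pg g)) (pr_int : forall r, rint (pr r)).
Variables (qg Kg Dg : G -> R) (qr Kr Dr : Rr -> R).

Lemma integrable_MS (delta : G -> T -> R) :
  (forall g, measurable_fun setT (delta g)) -> (forall g w, 0 <= delta g w <= Dg g) ->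
  rint (MS pg pr qg Kg Dg qr Kr Dr delta).
Proof.
move=> mdelta delta_bd; apply: integrable_realD.
  apply: integrable_realB; first exact: finite_measure_integrable_cst.
  by apply: integrable_real_sum => r; exact/integrable_realMr/integrable_call_payoff.
apply: integrable_real_sum => g.
have payoff_int := integrable_call_payoff (Kg g) (pg_int g).
apply: (integrable_real_le _ _ (integrable_realMr (Dg g) payoff_int)).
  apply: measurable_funM (mdelta g).
  exact/measurable_EFinP/(measurable_int _ payoff_int).
move=> w; have /andP[delta_ge0 delta_le] := delta_bd g w.
by rewrite !normrM ler_wpM2l // !ger0_norm // (le_trans delta_ge0).
Qed.

Lemma feasible_EMS_le0 pig pir qbar Kbar Dbar (delta : G -> T -> R) :
  (forall g, rint (pig g)) -> (forall r, rint (pir r)) ->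
  feasible P qbar Kbar Dbar pig pg pir pr qg Kg Dg qr Kr Dr delta ->
  (EMS P pg pr qg Kg Dg qr Kr Dr delta <= 0)%E.
Proof.
move=> pig_int pir_int [Dg_ge0 [_ [delta_ok [_ [buy [sell _]]]]]].
have full_bd g (w : T) : 0 <= Dg g <= Dg g by rewrite lexx (Dg_ge0 g).2.2.
apply: (@le_trans _ _ (\int[P]_w (MS pg pr qg Kg Dg qr Kr Dr (fun g _ => Dg g) w)%:E)%E).
  apply: le_integral => //.
  - exact: integrable_MS (fun g => (delta_ok g).1.1) (fun g => (delta_ok g).2).
  - exact: integrable_MS (fun g => measurable_cst (Dg g)) full_bd.
  move=> w _; rewrite lee_fin; apply: MS_le_full_delivery => g.
  by have /andP[] := (delta_ok g).2 w.
have sellers_int g := integrable_call_gain (qg g) (Kg g) (Dg g) (pg_int g).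
have buyers_int r := integrable_call_gain (qr r) (Kr r) (Dr r) (pr_int r).
under eq_integral do rewrite MS_full_deliveryE.
rewrite (integralB_EFin measurableT (integrable_real_sum sellers_int)
  (integrable_real_sum buyers_int)).
rewrite (integral_real_sum sellers_int) (integral_real_sum buyers_int).
rewrite sube_le0; apply: (@le_trans _ _ 0%E).
  by apply: sume_le0 => g _; exact: acc_seller_call_gain_le0 (pig_int g) (pg_int g) (sell g).
by apply: sume_ge0 => r _; exact: acc_buyer_call_gain_ge0 (pir_int r) (pr_int r) (buy r).
Qed.

End expected_surplus.
End risk_neutral.

Section no_trade.
Context {R : realType} {d : measure_display} {T : measurableType d} {G Rr : finType}.
Variables (P : probability T R) (pig pg : G -> T -> R) (pir pr : Rr -> T -> R).

Lemma feasible_no_trade qbar Kbar Dbar : 0 <= qbar -> 0 <= Kbar -> 0 <= Dbar ->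
  feasible P qbar Kbar Dbar pig pg pir pr (fun=> 0) (fun=> 0) (fun=> 0)
    (fun=> 0) (fun=> 0) (fun=> 0) (fun _ _ => 0).
Proof.
move=> qbar_ge0 Kbar_ge0 Dbar_ge0.
have A0_0 : inA0 qbar Kbar Dbar 0 0 0 by rewrite /inA0 lexx qbar_ge0 Kbar_ge0 Dbar_ge0.
split; first by move=> g; rewrite lexx.
split; first by move=> r; rewrite lexx.
split.
  move=> g; split; last by move=> w; rewrite lexx.
  split; first exact: measurable_cst.
  exact: (finite_measure_integrable_cst P (0 ^+ 2 : R) measurableT).
split; first by rewrite !big1.
split.
  move=> r; split=> //.
  by under [X in (_ <= X)%E]eq_integral do rewrite !mulr0 subr0 addr0.
split.
  move=> g; split=> //.
  by under [X in (_ <= X)%E]eq_integral do rewrite !mulr0 subr0 addr0.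
apply: aeW => w; split; first by move=> g; rewrite lexx.
by rewrite !big1 // => r _; rewrite mul0r.
Qed.

Lemma EMS_no_trade : EMS P pg pr (fun=> 0) (fun=> 0) (fun=> 0)
  (fun=> 0) (fun=> 0) (fun=> 0) (fun _ _ => 0) = 0%E.
Proof.
rewrite /EMS (eq_integral (cst 0%E)) ?integral0 // => w _.
by rewrite /MS !big1 ?subr0 ?addr0 // => i _; rewrite mulr0.
Qed.

End no_trade.

Theorem proposition2 (R : realType) (d : measure_display) (Omega : measurableType d)
  (P : probability Omega R) (G Rr : finType)
  (pig pg : G -> Omega -> R) (pir pr : Rr -> Omega -> R)
  (hpig : forall g, sq_integrable P (pig g)) (hpg : forall g, sq_integrable P (pg g))
  (hpir : forall r, sq_integrable P (pir r)) (hpr : forall r, sq_integrable P (pr r))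
  (qbar Kbar Dbar : R) (hq : 0 < qbar) (hK : 0 < Kbar) (hD : 0 < Dbar) :
  (exists (qg Kg Dg : G -> R) (qr Kr Dr : Rr -> R) (delta : G -> Omega -> R),
      feasible P qbar Kbar Dbar pig pg pir pr qg Kg Dg qr Kr Dr delta /\
      EMS P pg pr qg Kg Dg qr Kr Dr delta = 0%E) /\
  (forall (qg Kg Dg : G -> R) (qr Kr Dr : Rr -> R) (delta : G -> Omega -> R),
      feasible P qbar Kbar Dbar pig pg pir pr qg Kg Dg qr Kr Dr delta ->
      (EMS P pg pr qg Kg Dg qr Kr Dr delta <= 0)%E).
Proof.
split.
  exists (fun=> 0), (fun=> 0), (fun=> 0), (fun=> 0), (fun=> 0), (fun=> 0), (fun _ _ => 0).
  by split; [exact: feasible_no_trade (ltW hq) (ltW hK) (ltW hD) | exact: EMS_no_trade].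
move=> qg Kg Dg qr Kr Dr delta.
by apply: feasible_EMS_le0 => i; exact: sq_integrable_integrable.
Qed.
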